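(* Let $r\ge1$ and $s\ge2$. Let $P$ be the pattern of length $s(r+1)$ obtained by concatenating, for $i=1,2,\dots,s$ in order, the blocks $0^r\,i$ (i.e. $P=0^r\,1\,0^r\,2\,0^r\cdots 0^r\,(s-1)\,0^r\,s$), and let $P'$ be the pattern obtained by concatenating, for $i=1,\dots,s$ in order, the blocks $(i-1)^r\,i$ (i.e. $P'=0^r\,1\,1^r\,2\,2^r\cdots(s-1)^r\,s$), where $a^r$ denotes $r$ copies of $a$. Then the consecutive patterns $P$ and $P'$ are super-strongly Wilf equivalent.
   Context: An inversion sequence of length $n$ is an integer sequence $e=e_1e_2\dots e_n$ with $0\le e_i<i$ for all $i$; $\mathbf{I}_n$ denotes the set of these. The reduction of an integer word $w$ is obtained by replacing every occurrence of the $i$-th smallest distinct value of $w$ by $i-1$. For a pattern $p$ of length $m$, $\mathrm{Em}(p,e)$ is the set of positions $i$ such that the reduction of $e_i\dots e_{i+m-1}$ equals $p$. Two patterns are super-strongly Wilf equivalent if $|\{e\in\mathbf{I}_n:\mathrm{Em}(p,e)=T\}|=|\{e\in\mathbf{I}_n:\mathrm{Em}(p',e)=T\}|$ for all $n$ and all $T\subseteq[n]$. *)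

From mathcomp Require Import all_boot.
Unset Printing Implicit Defensive.

(* Inversion sequences of length n: e = e_1...e_n with 0 <= e_i < i.
   Stored 0-indexed as a seq nat: nth 0 e k < k.+1 for k < n. *)
Definition is_inv_seq (n : nat) (e : seq nat) : bool :=
  (size e == n) && all (fun k => nth 0 e k < k.+1) (iota 0 n).

Fixpoint inv_seqs (n : nat) : seq (seq nat) :=
  match n with
  | 0 => [:: [::]]
  | n'.+1 => [seq rcons e x | e <- inv_seqs n', x <- iota 0 n'.+1]
  end.

Definition red (w : seq nat) : seq nat :=
  [seq size (undup [seq y <- w | y < x]) | x <- w].

Definition factor (e : seq nat) (k m : nat) : seq nat := take m (drop k e).

(* Em(p,e) as a set of 0-indexed positions k : 'I_n (paper position k+1):
   the window e_{k+1}..e_{k+m} lies inside e and reduces to p. *)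
Definition Em (n : nat) (p e : seq nat) : {set 'I_n} :=
  [set k : 'I_n | (k + size p <= size e) && (red (factor e k (size p)) == p)].

Definition count_Em (n : nat) (p : seq nat) (T : {set 'I_n}) : nat :=
  count (fun e => is_inv_seq n e && (Em n p e == T)) (inv_seqs n).

Definition super_strongly_Wilf_equiv (p p' : seq nat) : Prop :=
  forall (n : nat) (T : {set 'I_n}), count_Em n p T = count_Em n p' T.

Definition patP (r s : nat) : seq nat :=
  flatten [seq nseq r 0 ++ [:: i] | i <- iota 1 s].
Definition patP' (r s : nat) : seq nat :=
  flatten [seq nseq r i.-1 ++ [:: i] | i <- iota 1 s].

From mathcomp Require Import all_boot zify.

Set Implicit Arguments.
Unset Strict Implicit.

(* Both patterns are concatenations of s blocks "plateau^r top" with tops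
   1, ..., s; they differ only in how the plateau of a block relates to the
   previous block: in P it equals the previous plateau, in P' the previous
   top.  So an occurrence of P (resp. P') at position k of a word e is a chain
   of s consecutive blocks of e with rising tops, joined by "flat" (resp.
   "stair") links (Em_patP, Em_patP').

   We build a map phi on words that keeps every letter except the plateaus of
   linked blocks, which are recomputed from left to right by a 3-cycle through
   the previous top (new_plateau).  phi preserves inversion sequences, block
   ends and links (phi_inv_seq, block_end_phi, linked_phi), is an involution
   (phiK), and exchanges flat and stair links (stair_link_phi).  Hence it maps
   Em P onto Em P' position by position, and the counting lemma
   count_Em_involution concludes. *)

Lemma mem_inv_seqs n e : (e \in inv_seqs n) = is_inv_seq n e.
Proof.
elim: n e => [|n IH] e; first by rewrite /is_inv_seq /= inE andbT; case: e.
have iotaS : iota 0 n.+1 = rcons (iota 0 n) n by rewrite -cats1 -addn1 iotaD.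
apply/allpairsP/idP => [[[e' x] [inv_e' lt_x ->]]|].
  rewrite mem_iota /= in lt_x; move: inv_e'; rewrite IH /is_inv_seq.
  case/andP=> /eqP size_e' /allP bnd; rewrite size_rcons size_e' eqxx iotaS all_rcons.
  rewrite nth_rcons size_e' ltnn eqxx lt_x /=; apply/allP=> k k_in.
  rewrite nth_rcons size_e'; move: (bnd k k_in).
  by rewrite mem_iota in k_in; case/andP: k_in => _ ->.
case/lastP: e => [|e x]; first by rewrite /is_inv_seq.
rewrite /is_inv_seq size_rcons eqSS iotaS all_rcons nth_rcons.
case/andP=> /eqP size_e /andP[lt_x /allP bnd]; rewrite size_e ltnn eqxx in lt_x.
exists (e, x); split => //; last by rewrite /= -iotaS mem_iota.
rewrite /= IH /is_inv_seq size_e eqxx /=; apply/allP=> k k_in; move: (bnd k k_in).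
by rewrite mem_iota in k_in; rewrite nth_rcons size_e (andP k_in).2.
Qed.

Lemma uniq_inv_seqs n : uniq (inv_seqs n).
Proof.
elim: n => [|n IH] //; apply: (allpairs_uniq IH (iota_uniq 0 n.+1)).
by move=> [a x] [b y] _ _ /= /eqP; rewrite eqseq_rcons => /andP[/eqP-> /eqP->].
Qed.

Lemma count_Em_involution n p p' (phi : seq nat -> seq nat) :
  (forall e, is_inv_seq n e -> is_inv_seq n (phi e)) ->
  (forall e, is_inv_seq n e -> phi (phi e) = e) ->
  (forall e, is_inv_seq n e -> Em n p' (phi e) = Em n p e) ->
  forall T, count_Em n p T = count_Em n p' T.
Proof.
move=> phi_inv phiK phi_Em T; rewrite /count_Em.
set S := inv_seqs n.
have inS e : (e \in S) = is_inv_seq n e by rewrite mem_inv_seqs.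
have phiS : perm_eq (map phi S) S.
  apply: uniq_perm; last 2 first.
  - exact: uniq_inv_seqs.
  - move=> x; apply/mapP/idP => [[y]|x_in]; first by rewrite !inS => /phi_inv y_inv ->.
    by exists (phi x); rewrite ?inS ?phiK ?phi_inv -?inS.
  rewrite map_inj_in_uniq; first exact: uniq_inv_seqs.
  by move=> x y; rewrite !inS => x_inv y_inv eq_phi; rewrite -(phiK x x_inv) eq_phi phiK.
rewrite -[RHS](permP phiS) count_map; apply: eq_in_count => e /=.
by rewrite inS => He; rewrite phi_inv // phi_Em // He.
Qed.

Definition rank (w : seq nat) (x : nat) : nat := size (undup [seq y <- w | y < x]).

Lemma redE w : red w = map (rank w) w.
Proof. by []. Qed.

Lemma rank_ltE w x y : x \in w -> (rank w x < rank w y) = (x < y).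
Proof.
move=> xw; case: (ltnP x y) => [xy|yx].
  have uniq_x : uniq (x :: undup [seq z <- w | z < x]).
    by rewrite /= undup_uniq mem_undup mem_filter ltnn.
  rewrite /rank; apply: (leq_trans _ (uniq_leq_size uniq_x _)) => // z.
  rewrite inE !mem_undup !mem_filter => /predU1P[->|/andP[zx ->]].
    by rewrite xy.
  by rewrite (ltn_trans zx xy).
apply/negbTE; rewrite -leqNgt; apply: uniq_leq_size; first exact: undup_uniq.
by move=> z; rewrite !mem_undup !mem_filter => /andP[zy ->]; rewrite (leq_trans zy yx).
Qed.

Definition order_iso (w p : seq nat) : Prop := forall i j, i < size p -> j < size p ->
  (nth 0 w i < nth 0 w j) = (nth 0 p i < nth 0 p j).

Lemma size_undup_map_in (f : nat -> nat) (s : seq nat) :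
  {in s &, injective f} -> size (undup (map f s)) = size (undup s).
Proof.
elim: s => [|x s IH] //= f_inj.
have f_inj_s : {in s &, injective f}.
  by move=> a b a_s b_s; apply: f_inj; rewrite inE ?a_s ?b_s orbT.
have -> : (f x \in map f s) = (x \in s).
  apply/mapP/idP => [[y ys fxy]|]; last by exists x.
  by rewrite (f_inj x y) // inE ?eqxx ?ys ?orbT.
by case: (x \in s) => /=; rewrite IH.
Qed.

Lemma red_order_iso w w' : size w = size w' -> order_iso w w' -> red w = red w'.
Proof.
move=> eq_size; rewrite /order_iso -eq_size => iso_ww'.
pose f y := nth 0 w' (index y w).
have f_nth i : i < size w -> f (nth 0 w i) = nth 0 w' i.
  move=> lt_i; rewrite /f; set i0 := index _ w.
  have lt_i0 : i0 < size w by rewrite index_mem mem_nth.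
  have i0_nth : nth 0 w i0 = nth 0 w i by rewrite nth_index // mem_nth.
  apply/eqP; rewrite eqn_leq; apply/andP; split; rewrite leqNgt.
    by rewrite -(iso_ww' i i0) // i0_nth ltnn.
  by rewrite -(iso_ww' i0 i) // i0_nth ltnn.
have w'E : w' = map f w.
  apply: (@eq_from_nth _ 0); first by rewrite size_map.
  by move=> i lt_i; rewrite (nth_map 0) ?f_nth // eq_size.
have f_mono : {in w &, forall a b, (f a < f b) = (a < b)}.
  by move=> a b /(nthP 0)[ia lt_ia <-] /(nthP 0)[ib lt_ib <-]; rewrite !f_nth ?iso_ww'.
rewrite w'E !redE -map_comp; apply/eq_in_map => x xw /=.
rewrite /rank filter_map size_undup_map_in.
  by congr (size (undup _)); apply: eq_in_filter => y yw /=; rewrite /preim f_mono.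
move=> a b; rewrite !mem_filter => /andP[_ aw] /andP[_ bw] fab.
apply/eqP; rewrite eqn_leq; apply/andP; split; rewrite leqNgt.
  by rewrite -(f_mono b a) // fab ltnn.
by rewrite -(f_mono a b) // fab ltnn.
Qed.

Definition reduced (p : seq nat) : Prop := forall x, x \in p -> forall y, y < x -> y \in p.

Lemma red_reduced p : reduced p -> red p = p.
Proof.
move=> red_p; rewrite redE -[RHS]map_id; apply/eq_in_map => x xp.
have perm_x : perm_eq (undup [seq y <- p | y < x]) (iota 0 x).
  apply: uniq_perm; [exact: undup_uniq | exact: iota_uniq|] => y.
  rewrite mem_undup mem_filter mem_iota leq0n add0n /=.
  by apply/andP/idP => [[]|yx] //; split; last exact: red_p xp _ yx.
by rewrite /rank (perm_size perm_x) size_iota.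
Qed.

Lemma red_eqP w p : reduced p -> red w = p <-> size w = size p /\ order_iso w p.
Proof.
move=> red_p; split => [<-|[eq_size iso_wp]]; last first.
  by rewrite (red_order_iso eq_size iso_wp) red_reduced.
rewrite redE size_map; split => // i j lt_i lt_j; rewrite size_map in lt_i lt_j.
by rewrite !(nth_map 0) // rank_ltE // mem_nth.
Qed.

(* The 3-cycle a -> v -> b -> a (a transposition when a = b), applied to z. *)
Definition cycle3 (a v b z : nat) : nat :=
  if z == a then v else if z == v then b else if z == b then a else z.

Ltac cycle3_cases := rewrite /cycle3; repeat case: ifP; move=> *; lia.

Section Cycle3.
Variables a v b : nat.
Hypotheses (lt_av : a < v) (lt_bv : b < v).

Lemma cycle3K z : cycle3 b v a (cycle3 a v b z) = z.
Proof. rewrite {2}/cycle3; repeat case: ifP; cycle3_cases. Qed.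

Lemma cycle3_lt z w : v < w -> z < w -> cycle3 a v b z < w.
Proof. cycle3_cases. Qed.

Lemma cycle3_id z : v < z -> cycle3 a v b z = z.
Proof. cycle3_cases. Qed.

Lemma cycle3_small z : cycle3 a v b z = z \/ cycle3 a v b z <= v.
Proof. cycle3_cases. Qed.

Lemma cycle3_eqv z : (cycle3 a v b z == v) = (z == a).
Proof. cycle3_cases. Qed.

End Cycle3.

Section Involution.
Variable r : nat.
Hypothesis r_gt0 : 0 < r.
Local Notation B := r.+1.

Definition plateau (e : seq nat) (q : nat) : nat := nth 0 e q.-1.

Definition block_end (e : seq nat) (q : nat) : bool :=
  [&& r <= q, all (fun x => nth 0 e x == plateau e q) (index_iota (q - r) q)
    & plateau e q < nth 0 e q].

Lemma block_endP e q : reflect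
  [/\ r <= q, forall x, q - r <= x < q -> nth 0 e x = plateau e q
    & plateau e q < nth 0 e q] (block_end e q).
Proof.
apply: (iffP and3P) => [[le_rq /allP run rise]|[le_rq run rise]]; split => //.
  by move=> x x_run; apply/eqP/run; rewrite mem_index_iota.
by apply/allP => x; rewrite mem_index_iota => /run ->.
Qed.

Lemma block_end_ge e q : block_end e q -> r <= q.
Proof. by case/block_endP. Qed.

Lemma run_at e q x : block_end e q -> q - r <= x < q -> nth 0 e x = plateau e q.
Proof. by case/block_endP => _ run _ /run. Qed.

Lemma plateau_lt_top e q : block_end e q -> plateau e q < nth 0 e q.
Proof. by case/block_endP. Qed.

Lemma block_end_lt_size e q : block_end e q -> q < size e.
Proof.
move/plateau_lt_top => rise; rewrite ltnNge; apply/negP => le_sq.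
by rewrite nth_default in rise.
Qed.

(* Two block ends whose runs meet are equal: otherwise the earlier rise
   would lie inside the later run. *)
Lemma block_end_runs_disj e q1 q2 x : block_end e q1 -> block_end e q2 ->
  q1 - r <= x < q1 -> q2 - r <= x < q2 -> q1 = q2.
Proof.
wlog lt_12 : q1 q2 / q1 < q2 => [hwlog|] be1 be2 x1 x2.
  by case: (ltngtP q1 q2) => [lt|lt|//]; [|symmetry]; apply: hwlog.
have := plateau_lt_top be1; rewrite /plateau.
by rewrite (run_at be2 (x := q1.-1)) ?(run_at be2 (x := q1)) ?ltnn //; lia.
Qed.

Definition linked (e : seq nat) (q : nat) : bool :=
  [&& block_end e (q - B), block_end e q & nth 0 e (q - B) < nth 0 e q].

Lemma linked_prev e q : linked e q -> block_end e (q - B).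
Proof. by case/and3P. Qed.

Lemma linked_cur e q : linked e q -> block_end e q.
Proof. by case/and3P. Qed.

Lemma linked_rise e q : linked e q -> nth 0 e (q - B) < nth 0 e q.
Proof. by case/and3P. Qed.

Lemma linked_gt e q : linked e q -> B < q.
Proof. by move/linked_prev/block_end_ge; lia. Qed.

(* The fuel argument only serves
   termination (q - B < q). *)
Fixpoint new_plateau_rec (fuel : nat) (e : seq nat) (q : nat) : nat :=
  if fuel is fuel'.+1 then
    if linked e q then
      cycle3 (plateau e (q - B)) (nth 0 e (q - B)) (new_plateau_rec fuel' e (q - B))
        (plateau e q)
    else plateau e q
  else plateau e q.

Definition new_plateau (e : seq nat) (q : nat) : nat := new_plateau_rec q e q.

Lemma new_plateau_rec_fuel e f1 f2 q : q <= f1 -> q <= f2 ->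
  new_plateau_rec f1 e q = new_plateau_rec f2 e q.
Proof.
elim: f1 f2 q => [|f1 IH] [|f2] q /= le1 le2 //; case: ifP => // /linked_gt lt_Bq.
- by exfalso; lia.
- by exfalso; lia.
by congr cycle3; apply: IH; lia.
Qed.

Lemma new_plateauE e q : new_plateau e q =
  if linked e q then
    cycle3 (plateau e (q - B)) (nth 0 e (q - B)) (new_plateau e (q - B)) (plateau e q)
  else plateau e q.
Proof.
rewrite /new_plateau; case: q => [|q] /=; first by case: ifP => // /linked_gt.
case: ifP => // /linked_gt lt_Bq; congr cycle3; apply: new_plateau_rec_fuel; lia.
Qed.

Lemma new_plateau_lt e q : block_end e q -> new_plateau e q < nth 0 e q.
Proof.
elim/ltn_ind: q => q IH be_q; rewrite new_plateauE.
case: ifP => [lnk|_]; last exact: plateau_lt_top.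
have be_p := linked_prev lnk.
apply: cycle3_lt; [exact: plateau_lt_top | | exact: linked_rise | exact: plateau_lt_top].
by apply: IH => //; have := linked_gt lnk; lia.
Qed.

Lemma new_plateau_linked e q : linked e q ->
  exists2 b, b < nth 0 e (q - B) &
    new_plateau e q = cycle3 (plateau e (q - B)) (nth 0 e (q - B)) b (plateau e q).
Proof.
move=> lnk; rewrite new_plateauE lnk.
by exists (new_plateau e (q - B)); first exact/new_plateau_lt/linked_prev.
Qed.

Lemma new_plateau_id e q : linked e q -> nth 0 e (q - B) < plateau e q ->
  new_plateau e q = plateau e q.
Proof.
move=> lnk lt_vz; have [b lt_b ->] := new_plateau_linked lnk.
by apply: cycle3_id => //; exact/plateau_lt_top/linked_prev.
Qed.

Lemma new_plateau_small e q : linked e q ->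
  new_plateau e q = plateau e q \/ new_plateau e q <= nth 0 e (q - B).
Proof.
move=> lnk; have [b lt_b ->] := new_plateau_linked lnk.
by apply: cycle3_small => //; exact/plateau_lt_top/linked_prev.
Qed.

(* The new plateau equals the previous top iff the old plateau equals the
   previous plateau: this is how the involution exchanges the two patterns. *)
Lemma new_plateau_eq_top e q : linked e q ->
  (new_plateau e q == nth 0 e (q - B)) = (plateau e q == plateau e (q - B)).
Proof.
move=> lnk; have [b lt_b ->] := new_plateau_linked lnk.
by apply: cycle3_eqv => //; exact/plateau_lt_top/linked_prev.
Qed.

(* Position p is owned when it lies in the run of a linked block end; by
   disjointness of runs that block end is unique, and owner finds it. *)
Definition owned (e : seq nat) (p : nat) : bool :=
  has (fun j => linked e (p + j.+1)) (iota 0 r).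

Definition owner (e : seq nat) (p : nat) : nat :=
  p + (find (fun j => linked e (p + j.+1)) (iota 0 r)).+1.

Definition phi (e : seq nat) : seq nat :=
  mkseq (fun p => if owned e p then new_plateau e (owner e p) else nth 0 e p) (size e).

Lemma size_phi e : size (phi e) = size e.
Proof. exact: size_mkseq. Qed.

Lemma ownedP e p : owned e p -> linked e (owner e p) /\ owner e p - r <= p < owner e p.
Proof.
move=> own; have lt_find : find (fun j => linked e (p + j.+1)) (iota 0 r) < r.
  by move: own; rewrite /owned has_find size_iota.
split; last by rewrite /owner; lia.
by have := nth_find 0 own; rewrite nth_iota.
Qed.

Lemma owned_run e p q : linked e q -> q - r <= p < q -> owned e p.
Proof.
move=> lnk p_run; apply/hasP; exists (q - p).-1; first by rewrite mem_iota; lia.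
by have -> : p + (q - p).-1.+1 = q by lia.
Qed.

Lemma nth_phi_owned e p q : p < size e -> linked e q -> q - r <= p < q ->
  nth 0 (phi e) p = new_plateau e q.
Proof.
move=> lt_p lnk p_run; have own := owned_run lnk p_run.
rewrite nth_mkseq // own; have [lnk' p_run'] := ownedP own; congr new_plateau.
exact: block_end_runs_disj (linked_cur lnk') (linked_cur lnk) p_run' p_run.
Qed.

Lemma nth_phi_free e p : ~~ owned e p -> nth 0 (phi e) p = nth 0 e p.
Proof.
move=> free; case: (ltnP p (size e)) => [lt_p|le_p].
  by rewrite nth_mkseq // (negbTE free).
by rewrite !nth_default ?size_phi.
Qed.

Lemma nth_phiP e p : p < size e ->
  (exists2 q, linked e q /\ q - r <= p < q & nth 0 (phi e) p = new_plateau e q)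
  \/ nth 0 (phi e) p = nth 0 e p.
Proof.
move=> lt_p; case own: (owned e p); last by right; rewrite nth_phi_free ?own.
have [lnk p_run] := ownedP own.
by left; exists (owner e p) => //; exact: nth_phi_owned.
Qed.

Lemma phi_top e q : block_end e q -> nth 0 (phi e) q = nth 0 e q.
Proof.
move=> be; have [[q0 [lnk q_run] ->]|//] := nth_phiP (block_end_lt_size be).
have be0 := linked_cur lnk.
have q_start : q = q0 - r.
  apply/eqP; rewrite eqn_leq (andP q_run).1 andbT leqNgt; apply/negP => lt_q.
  have := plateau_lt_top be; rewrite /plateau.
  by rewrite (run_at be0 (x := q.-1)) ?(run_at be0 (x := q)) ?ltnn //; lia.
rewrite (run_at be0 q_run) new_plateau_id // -(run_at be0 q_run).
have -> : q0 - B = q.-1 by have := linked_gt lnk; lia.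
exact: plateau_lt_top.
Qed.

Lemma phi_run e q x : block_end e q -> q - r <= x < q ->
  nth 0 (phi e) x = new_plateau e q.
Proof.
move=> be x_run; have lt_x : x < size e by have := block_end_lt_size be; lia.
case lnk: (linked e q); first exact: nth_phi_owned.
have [[q0 [lnk0 x_run0] ->]|->] := nth_phiP lt_x.
  have eq_q0 := block_end_runs_disj (linked_cur lnk0) be x_run0 x_run.
  by rewrite eq_q0 lnk in lnk0.
by rewrite new_plateauE lnk (run_at be x_run).
Qed.

Lemma plateau_phi e q : block_end e q -> plateau (phi e) q = new_plateau e q.
Proof. by move=> be; rewrite /plateau (phi_run be) //; have := block_end_ge be; lia. Qed.

Lemma block_end_phi_of e q : block_end e q -> block_end (phi e) q.
Proof.
move=> be; apply/block_endP; split; first exact: block_end_ge be.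
  by move=> x x_run; rewrite plateau_phi // (phi_run be).
by rewrite plateau_phi // phi_top //; exact: new_plateau_lt.
Qed.

Section NoNewBlockEnd.
Variables (e : seq nat) (q : nat).
Hypotheses (be' : block_end (phi e) q) (not_linked : ~~ linked e q).

Let lt_q : q < size e.
Proof. by rewrite -(size_phi e); exact: block_end_lt_size. Qed.

Lemma phi_top_back : nth 0 (phi e) q = nth 0 e q.
Proof.
have [[q0 [lnk0 q_run] ->]|//] := nth_phiP lt_q.
have [->|le_v] := new_plateau_small lnk0; first by rewrite (run_at (linked_cur lnk0) q_run).
exfalso; have := plateau_lt_top be'; rewrite /plateau.
case: (ltnP q.-1 (q0 - r)) => [lt_q1|ge_q1].
  have -> : q.-1 = q0 - B by have := linked_gt lnk0; lia.
  by rewrite (phi_top (linked_prev lnk0)) (nth_phi_owned lt_q lnk0 q_run); lia.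
by rewrite !(nth_phi_owned _ lnk0) ?ltnn //; lia.
Qed.

Lemma phi_run_back x : q - r <= x < q -> nth 0 (phi e) x = nth 0 e x.
Proof.
move=> x_run; have lt_x : x < size e by lia.
have [[q0 [lnk0 x_run0] ->]|//] := nth_phiP lt_x.
have be0 := linked_cur lnk0; rewrite (run_at be0 x_run0).
case: (ltngtP q0 q) => [lt_q0|gt_q0|eq_q0]; last by move: not_linked; rewrite -eq_q0 lnk0.
  exfalso; have := new_plateau_lt be0.
  rewrite -(phi_top be0) -(nth_phi_owned (p := q0.-1) _ lnk0); try lia.
  by rewrite (run_at be' (x := q0.-1)) ?(run_at be' (x := q0)) ?ltnn //; lia.
have q_run0 : q0 - r <= q < q0 by lia.
by have := phi_top_back; rewrite (nth_phi_owned lt_q lnk0 q_run0) (run_at be0 q_run0).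
Qed.

End NoNewBlockEnd.

Lemma block_end_phi_back e q : block_end (phi e) q -> block_end e q.
Proof.
move=> be'; case lnk: (linked e q); first exact: linked_cur.
have not_linked : ~~ linked e q by rewrite lnk.
have q1_run : q - r <= q.-1 < q by have := block_end_ge be'; lia.
apply/block_endP; split; first exact: block_end_ge be'.
  move=> x x_run; rewrite /plateau -(phi_run_back be' not_linked x_run).
  by rewrite -(phi_run_back be' not_linked q1_run) (run_at be' x_run).
rewrite /plateau -(phi_run_back be' not_linked q1_run) -(phi_top_back be' not_linked).
exact: plateau_lt_top.
Qed.

Lemma block_end_phi e q : block_end (phi e) q = block_end e q.
Proof. by apply/idP/idP => [/block_end_phi_back|/block_end_phi_of]. Qed.

Lemma linked_phi e q : linked (phi e) q = linked e q.
Proof.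
rewrite /linked !block_end_phi; apply: andb_id2l => be_p; apply: andb_id2l => be_q.
by rewrite !phi_top.
Qed.

(* Applying the construction to phi e recovers the old plateaus: the 3-cycle
   used for phi e is the inverse of the one used for e. *)
Lemma new_plateau_phi e q : block_end e q -> new_plateau (phi e) q = plateau e q.
Proof.
elim/ltn_ind: q => q IH be; rewrite new_plateauE linked_phi.
case: ifP => lnk; last by rewrite plateau_phi // new_plateauE lnk.
have be_p := linked_prev lnk.
rewrite IH //; last by have := linked_gt lnk; lia.
rewrite (plateau_phi be) (plateau_phi be_p) (phi_top be_p) [new_plateau e q]new_plateauE lnk.
by rewrite cycle3K //; [exact: plateau_lt_top | exact: new_plateau_lt].
Qed.

Lemma phiK e : phi (phi e) = e.
Proof.
apply: (@eq_from_nth _ 0); rewrite ?size_phi // => p lt_p.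
have owned_phi : owned (phi e) p = owned e p by apply: eq_has => j; rewrite linked_phi.
have owner_phi : owner (phi e) p = owner e p.
  by rewrite /owner; congr (_ + _.+1); apply: eq_find => j; rewrite linked_phi.
rewrite nth_mkseq ?size_phi // owned_phi owner_phi.
case: ifP => own; last by rewrite nth_phi_free ?own.
have [/linked_cur be p_run] := ownedP own.
by rewrite new_plateau_phi // (run_at be p_run).
Qed.

(* New plateau values never exceed the old letters at earlier positions, so
   phi preserves inversion sequences. *)
Lemma phi_inv_seq n e : is_inv_seq n e -> is_inv_seq n (phi e).
Proof.
rewrite /is_inv_seq size_phi => /andP[size_e /allP inv_e]; rewrite size_e /=.
have le_k k : k < n -> nth 0 e k <= k.
  by move=> lt_k; have := inv_e k; rewrite mem_iota => /(_ lt_k).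
apply/allP => k; rewrite mem_iota add0n ltnS => lt_kn.
have lt_k : k < size e by rewrite (eqP size_e).
have [[q [lnk k_run] ->]|->] := nth_phiP lt_k; last exact: le_k.
have [->|le_v] := new_plateau_small lnk.
  by rewrite -(run_at (linked_cur lnk) k_run) le_k.
apply: (leq_trans le_v); apply: leq_trans (le_k _ _) _; have := linked_gt lnk; lia.
Qed.

Definition flat_link (e : seq nat) (q : nat) : bool :=
  linked e q && (plateau e q == plateau e (q - B)).

Definition stair_link (e : seq nat) (q : nat) : bool :=
  linked e q && (plateau e q == nth 0 e (q - B)).

Lemma stair_link_phi e q : stair_link (phi e) q = flat_link e q.
Proof.
rewrite /stair_link /flat_link linked_phi; apply: andb_id2l => lnk.
by rewrite (plateau_phi (linked_cur lnk)) (phi_top (linked_prev lnk)) new_plateau_eq_top.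
Qed.

Definition chain (X : seq nat -> nat -> bool) (e : seq nat) (k s : nat) : bool :=
  block_end e (k + r) && all (fun i => X e (k + i * B + r)) (iota 1 s.-1).

Lemma chain_stair_phi e k s : chain stair_link (phi e) k s = chain flat_link e k s.
Proof.
by rewrite /chain block_end_phi; congr andb; apply: eq_all => i; rewrite stair_link_phi.
Qed.

End Involution.

Lemma size_blocks (F : nat -> seq nat) b a n : (forall x, size (F x) = b) ->
  size (flatten (map F (iota a n))) = n * b.
Proof. by move=> size_F; elim: n a => [|n IH] a //=; rewrite size_cat IH size_F mulSn. Qed.

Lemma nth_blocks (F : nat -> seq nat) b a n i j : (forall x, size (F x) = b) ->
  i < n -> j < b -> nth 0 (flatten (map F (iota a n))) (i * b + j) = nth 0 (F (a + i)) j.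
Proof.
move=> size_F; elim: n a i => [|n IH] a [|i] //= lt_i lt_j.
  by rewrite mul0n add0n nth_cat size_F lt_j addn0.
by rewrite nth_cat size_F mulSn -addnA ltnNge leq_addr /= addKn IH // addSnnS.
Qed.

(* Occurrences of the block patterns: a window of length s * B is split into
   s blocks of length B, position i * B + j being letter j of block i. *)
Section Occurrences.
Variables r s : nat.
Hypotheses (r_gt0 : 0 < r) (s_gt0 : 0 < s).
Local Notation B := r.+1.

Lemma block_index_lt i j : i < s -> j < B -> i * B + j < s * B.
Proof.
move=> lt_i lt_j; have : i.+1 * B <= s * B by rewrite leq_mul2r lt_i orbT.
by rewrite mulSn; lia.
Qed.

Lemma block_decomp t : t < s * B -> exists i j, [/\ i < s, j < B & t = i * B + j].
Proof.
move=> lt_t; exists (t %/ B), (t %% B); split; last exact: divn_eq.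
  by rewrite ltn_divLR.
by rewrite ltn_pmod.
Qed.

(* Both patterns consist of s blocks; block i (from 0) is (plat i)^r (i+1),
   with plat i = 0 for P and plat i = i for P'. *)
Definition block_letter (plat : nat -> nat) (i j : nat) : nat :=
  if j < r then plat i else i.+1.

Lemma block_letter_le plat i j : plat i <= i -> block_letter plat i j <= i.+1.
Proof. by rewrite /block_letter; case: ifP; lia. Qed.

Definition block_iso (e : seq nat) (k : nat) (plat : nat -> nat) : Prop :=
  forall i1 j1 i2 j2, i1 < s -> j1 < B -> i2 < s -> j2 < B ->
  (nth 0 e (k + (i1 * B + j1)) < nth 0 e (k + (i2 * B + j2))) =
  (block_letter plat i1 j1 < block_letter plat i2 j2).

Section Pattern.
Variables (plat : nat -> nat) (p : seq nat).
Hypotheses (plat_le : forall i, plat i <= i) (size_p : size p = s * B)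
  (nth_p : forall i j, i < s -> j < B -> nth 0 p (i * B + j) = block_letter plat i j).

Lemma mem_pattern i j : i < s -> j < B -> block_letter plat i j \in p.
Proof. by move=> lt_i lt_j; rewrite -nth_p // mem_nth // size_p block_index_lt. Qed.

Lemma reduced_pattern : reduced p.
Proof.
move=> x /(nthP 0)[t]; rewrite size_p => /block_decomp[i [j [lt_i lt_j ->]]].
rewrite nth_p // => <- y lt_y; have := block_letter_le j (plat_le i).
case: y lt_y => [|y] lt_y le_x.
  have := mem_pattern s_gt0 (ltn0Sn r); rewrite /block_letter r_gt0.
  by have := plat_le 0; rewrite leqn0 => /eqP ->.
have := mem_pattern (i := y) (j := r); rewrite /block_letter ltnn; apply; lia.
Qed.

Lemma factor_nth e k m t : t < m -> nth 0 (factor e k m) t = nth 0 e (k + t).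
Proof. by move=> lt_t; rewrite /factor nth_take // nth_drop. Qed.

Lemma occurrence_block_iso e k : k + s * B <= size e ->
  red (factor e k (size p)) = p <-> block_iso e k plat.
Proof.
move=> fits; rewrite red_eqP; last exact: reduced_pattern.
rewrite /order_iso size_p; split.
  case=> _ iso i1 j1 i2 j2 lt_i1 lt_j1 lt_i2 lt_j2.
  have lt1 := block_index_lt lt_i1 lt_j1; have lt2 := block_index_lt lt_i2 lt_j2.
  by rewrite -!nth_p // -iso // !factor_nth.
move=> iso; split; first by rewrite size_takel // size_drop; lia.
move=> t1 t2 /block_decomp[i1 [j1 [lt_i1 lt_j1 ->]]] /block_decomp[i2 [j2 [lt_i2 lt_j2 ->]]].
by rewrite !factor_nth ?block_index_lt // !nth_p // iso.
Qed.

End Pattern.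

Lemma block_iso_eq e k plat : block_iso e k plat ->
  forall i1 j1 i2 j2, i1 < s -> j1 < B -> i2 < s -> j2 < B ->
  block_letter plat i1 j1 = block_letter plat i2 j2 ->
  nth 0 e (k + (i1 * B + j1)) = nth 0 e (k + (i2 * B + j2)).
Proof.
move=> iso i1 j1 i2 j2 lt_i1 lt_j1 lt_i2 lt_j2 eq_letter.
by apply/eqP; rewrite eqn_leq; apply/andP; split; rewrite leqNgt iso // eq_letter ltnn.
Qed.

Lemma plateau_block e k i : plateau e (k + i * B + r) = nth 0 e (k + (i * B + r.-1)).
Proof. by rewrite /plateau; congr nth; lia. Qed.

Lemma prev_block k i : k + i.+1 * B + r - B = k + i * B + r.
Proof. by rewrite mulSn; lia. Qed.

Lemma block_iso_block_end e k plat : (forall i, plat i <= i) -> block_iso e k plat ->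
  forall i, i < s -> block_end r e (k + i * B + r).
Proof.
move=> plat_le iso i lt_i; have lt_r1 : r.-1 < B by lia.
apply/block_endP; split; first by lia.
  move=> x x_run; rewrite plateau_block.
  have -> : x = k + (i * B + (x - k - i * B)) by lia.
  have [lt_j lt_r1'] : x - k - i * B < r /\ r.-1 < r by lia.
  by apply: (block_iso_eq iso) => //; rewrite ?/block_letter ?lt_j ?lt_r1'; lia.
rewrite plateau_block -addnA iso // /block_letter ltnn.
by have := plat_le i; case: ifP; lia.
Qed.

Lemma block_iso_chain (X : seq nat -> nat -> bool) e k plat :
  (forall i, plat i <= i) -> block_iso e k plat ->
  (forall i, i.+1 < s -> linked r e (k + i.+1 * B + r) -> X e (k + i.+1 * B + r)) ->
  chain r X e k s.
Proof.
move=> plat_le iso link_X; have be := block_iso_block_end plat_le iso.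
apply/andP; split; first by have := be 0 s_gt0; rewrite mul0n addn0.
apply/allP => -[|i]; rewrite mem_iota // => lt_i.
have lt_is : i.+1 < s by lia.
apply: (link_X i lt_is).
apply/and3P; split; rewrite ?prev_block; [exact: be (ltnW lt_is) | exact: be lt_is |].
have top_lt : block_letter plat i r < block_letter plat i.+1 r by rewrite /block_letter ltnn.
by rewrite -!addnA iso //; lia.
Qed.

(* The letters of the chain are listed by
   chain_value: the first plateau, then the s tops, an increasing sequence. *)
Definition chain_value (e : seq nat) (k x : nat) : nat :=
  if x is i.+1 then nth 0 e (k + i * B + r) else plateau e (k + r).

Section Chain.
Variable X : seq nat -> nat -> bool.
Hypothesis X_linked : forall e q, X e q -> linked r e q.

Lemma chain_block_end e k : chain r X e k s ->
  forall i, i < s -> block_end r e (k + i * B + r).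
Proof.
case/andP=> be0 /allP links [|i] lt_i; first by rewrite mul0n addn0.
by apply/linked_cur/X_linked/links; rewrite mem_iota; lia.
Qed.

Lemma chain_value_ltE e k : chain r X e k s ->
  forall x y, x <= s -> y <= s -> (chain_value e k x < chain_value e k y) = (x < y).
Proof.
move=> ch; case/andP: (ch) => be0 /allP links.
have step x : x < s -> chain_value e k x < chain_value e k x.+1.
  case: x => [_|i lt_i] /=; first by rewrite mul0n addn0; exact: plateau_lt_top be0.
  have link_i : i.+1 \in iota 1 s.-1 by rewrite mem_iota; lia.
  have := linked_rise (X_linked (links _ link_i)).
  by rewrite prev_block.
have mono : {in [pred x | x <= s] &, {homo chain_value e k : x y / x < y}}.
  apply: homo_ltn_in => [y x z|x y _ le_y z /andP[_ lt_zy]|x _ le_x1].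
  - exact: ltn_trans.
  - by rewrite !inE /= in le_y *; lia.
  - by apply: step; rewrite inE /= in le_x1.
move=> x y le_x le_y; case: (ltngtP x y) => [lt_xy|lt_yx|->]; last exact: ltnn.
  exact: mono.
by apply/negbTE; rewrite -leqNgt ltnW // mono.
Qed.

Lemma chain_block_iso e k plat : (forall i, plat i <= i) -> chain r X e k s ->
  (forall i, i < s -> plateau e (k + i * B + r) = chain_value e k (plat i)) ->
  block_iso e k plat.
Proof.
move=> plat_le ch plat_val.
have letter i j : i < s -> j < B ->
    nth 0 e (k + (i * B + j)) = chain_value e k (block_letter plat i j).
  move=> lt_i lt_j; rewrite /block_letter; case: ifP => [lt_jr|/negbT]; last first.
    by rewrite -leqNgt => le_rj; rewrite /= addnA; congr nth; lia.
  by rewrite -plat_val // -(run_at (x := k + (i * B + j)) (chain_block_end ch lt_i)) //; lia.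
move=> i1 j1 i2 j2 lt_i1 lt_j1 lt_i2 lt_j2.
have le_s i j : i < s -> block_letter plat i j <= s.
  by move=> lt_i; apply: leq_trans (block_letter_le j (plat_le i)) lt_i.
by rewrite !letter // (chain_value_ltE ch) ?le_s.
Qed.

End Chain.

Lemma flat_chainP e k : chain r (flat_link r) e k s <-> block_iso e k (fun=> 0).
Proof.
have lt_r1 : r.-1 < r by lia.
split => [ch|iso].
  have /andP[_ /allP links] := ch.
  apply: (chain_block_iso (X := flat_link r) _ (fun i => leq0n i) ch) => [e' q /andP[] //|].
  elim=> [|i IH] lt_i /=; first by rewrite mul0n addn0.
  have link_i : i.+1 \in iota 1 s.-1 by rewrite mem_iota; lia.
  have /andP[_ /eqP ->] := links _ link_i.
  by rewrite prev_block IH //; lia.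
apply: (block_iso_chain (fun i => leq0n i) iso) => i lt_i lnk.
rewrite /flat_link lnk prev_block !plateau_block; apply/eqP.
by apply: (block_iso_eq iso); rewrite ?/block_letter ?lt_r1; lia.
Qed.

Lemma stair_chainP e k : chain r (stair_link r) e k s <-> block_iso e k id.
Proof.
have lt_r1 : r.-1 < r by lia.
split => [ch|iso].
  have /andP[_ /allP links] := ch.
  apply: (chain_block_iso (X := stair_link r) _ (fun i => leqnn i) ch) => [e' q /andP[] //|].
  case=> [|i] lt_i /=; first by rewrite mul0n addn0.
  have link_i : i.+1 \in iota 1 s.-1 by rewrite mem_iota; lia.
  by have /andP[_ /eqP ->] := links _ link_i; rewrite prev_block.
apply: (block_iso_chain (fun i => leqnn i) iso) => i lt_i lnk.
rewrite /stair_link lnk prev_block plateau_block -addnA; apply/eqP.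
by apply: (block_iso_eq iso); rewrite ?/block_letter ?lt_r1 ?ltnn; lia.
Qed.

Definition block_word (c : nat -> nat) : seq nat :=
  flatten [seq nseq r (c i) ++ [:: i] | i <- iota 1 s].

Lemma size_block_word c : size (block_word c) = s * B.
Proof. by apply: size_blocks => x; rewrite size_cat size_nseq addn1. Qed.

Lemma nth_block_word c i j : i < s -> j < B ->
  nth 0 (block_word c) (i * B + j) = block_letter (fun i => c i.+1) i j.
Proof.
move=> lt_i lt_j; rewrite nth_blocks //; last by move=> x; rewrite size_cat size_nseq addn1.
rewrite nth_cat size_nseq /block_letter; case: ltnP => [lt_jr|le_rj].
  by rewrite nth_nseq lt_jr.
by have -> : j - r = 0 by lia.
Qed.

Lemma Em_patP n e : Em n (patP r s) e =
  [set k : 'I_n | (k + s * B <= size e) && chain r (flat_link r) e k s].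
Proof.
have -> : patP r s = block_word (fun=> 0) by [].
apply/setP => k; rewrite !inE {1}size_block_word; case fits: (k + s * B <= size e) => //=.
have occ := occurrence_block_iso (fun i => leq0n i) (size_block_word _)
  (nth_block_word (fun=> 0)) fits.
by apply/eqP/idP => [/occ/flat_chainP|/flat_chainP/occ].
Qed.

Lemma Em_patP' n e : Em n (patP' r s) e =
  [set k : 'I_n | (k + s * B <= size e) && chain r (stair_link r) e k s].
Proof.
have -> : patP' r s = block_word predn by [].
apply/setP => k; rewrite !inE {1}size_block_word; case fits: (k + s * B <= size e) => //=.
have occ := occurrence_block_iso (fun i => leqnn i) (size_block_word _)
  (nth_block_word predn) fits.
by apply/eqP/idP => [/occ/stair_chainP|/stair_chainP/occ].
Qed.

End Occurrences.

Theorem mainTheorem6 (r s : nat) (hr : 1 <= r) (hs : 2 <= s) :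
  super_strongly_Wilf_equiv (patP r s) (patP' r s).
Proof.
move=> n T; have s_gt0 : 0 < s by lia.
apply: (count_Em_involution (phi := phi r)) => e inv_e.
- exact: phi_inv_seq.
- exact: phiK.
apply/setP => k; rewrite (Em_patP' hr s_gt0) (Em_patP hr s_gt0) !inE size_phi.
by rewrite chain_stair_phi.
Qed.
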